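(* Let $A=\langle Q,\delta,\gamma,F\rangle$ be a finitely supported pomset automaton. Let $q_0,q_2,q_4\in Q$ and $q_1,q_3,q_5\in F$, and let $U,V,W,X\in\mathsf{Pom}^{\mathsf{sp}}$ be such that $q_0\xrightarrow{U}_A q_1$, $q_0\xrightarrow{V}_A q_0$, $q_2\xrightarrow{X}_A q_3$, $q_4\xrightarrow{W}_A q_5$ and $\gamma(q_0,q_2,q_0)=q_4$. If $X\neq 1$, and moreover $W\neq1$ or $V\neq1$, then $L_A(q_0)$ has unbounded depth, i.e., for every $n\in\mathbb N$ there is $Y\in L_A(q_0)$ with $|Y|>n$.
   Context: Fix a finite alphabet $\Sigma$; pomsets are isomorphism classes of $\Sigma$-labelled posets, $1$ the empty pomset, $a\in\Sigma$ the one-point pomset, $U\cdot V$ the disjoint union with all of $U$ below all of $V$, $U\parallel V$ the disjoint union without added order, and $\mathsf{Pom}^{\mathsf{sp}}$ the smallest set containing $1$ and all $a$ closed under both. Every non-empty series-parallel pomset is exactly one of: a primitive $a$, a sequential composition of two non-empty smaller sp-pomsets, or a parallel composition of two non-empty smaller sp-pomsets. The depth $|U|$ is defined by $|1|=0$, $|a|=1$, and if $U=U_0\cdots U_{n-1}$ or $U=U_0\parallel\dots\parallel U_{n-1}$ with non-empty $U_i$ and $n>1$ maximal for such a decomposition, then $|U|=\max_i|U_i|+1$. A PA is $A=\langle Q,\delta,\gamma,F\rangle$ with $F\subseteq Q$, $\delta:Q\times\Sigma\to Q$, $\gamma:Q^3\to Q$, with states $\bot\notin F$, $\top\in F$ such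 that $\delta(\bot,a)=\delta(\top,a)=\bot$, $\gamma(\bot,r,s)=\gamma(\top,r,s)=\bot$. Traces: the smallest relation with $q\xrightarrow{1}_A q$; $q\xrightarrow{a}_A\delta(q,a)$; $q\xrightarrow{U}_A q''\xrightarrow{V}_A q'$ implies $q\xrightarrow{U\cdot V}_A q'$; $r\xrightarrow{U}_A r'\in F$, $s\xrightarrow{V}_A s'\in F$ imply $q\xrightarrow{U\parallel V}_A\gamma(q,r,s)$. $L_A(q)=\{U:\exists q'\in F.\ q\xrightarrow{U}_A q'\}$. $\preceq_A$ is the smallest preorder with $r,s\preceq_A q$ when $\gamma(q,r,s)\neq\bot$, $\delta(q,a)\preceq_A q$, $\gamma(q,r,s)\preceq_A q$; $\pi_A(q)$ is the smallest $\preceq_A$-downward-closed set containing $q$; $A$ is finitely supported if all $\pi_A(q)$ are finite. *)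

From Stdlib Require Import Relations List.
From mathcomp Require Import all_boot.
Set Implicit Arguments. Unset Strict Implicit. Unset Printing Implicit Defensive.

Section Pomsets.
Variable Sigma : finType.

(* Pomsets are these structures taken up to the isomorphism [iso] below;
   all structures generated below (by [pone], [prim], [pseq], [ppar]) are
   partial orders, hence so is every sp-pomset. *)
Record pomset := Pomset {
  psize : nat;
  pord : rel 'I_psize;
  plab : 'I_psize -> Sigma }.
Arguments pord : clear implicits.
Arguments plab : clear implicits.

Definition is_poset (U : pomset) : Prop :=
  reflexive (pord U) /\ antisymmetric (pord U) /\ transitive (pord U).

Definition iso (U V : pomset) : Prop :=
  exists f : 'I_(psize U) -> 'I_(psize V),
    bijective f /\ (forall x y, pord V (f x) (f y) = pord U x y)
    /\ (forall x, plab V (f x) = plab U x).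

Lemma ord0_absurd (x : 'I_0) : False. Proof. by case: x. Qed.

Definition pone : pomset :=
  @Pomset 0 (fun _ _ => true) (fun x => match ord0_absurd x with end).

Definition prim (a : Sigma) : pomset :=
  @Pomset 1 (fun _ _ => true) (fun _ => a).

Definition sum_lab (U V : pomset) (x : 'I_(psize U + psize V)) : Sigma :=
  match split x with inl a => plab U a | inr b => plab V b end.
Arguments sum_lab : clear implicits.

Definition pseq (U V : pomset) : pomset :=
  @Pomset (psize U + psize V)
    (fun x y => match split x, split y with
                | inl a, inl b => pord U a b
                | inr a, inr b => pord V a b
                | inl _, inr _ => true
                | inr _, inl _ => false end)
    (sum_lab U V).

Definition ppar (U V : pomset) : pomset :=
  @Pomset (psize U + psize V)
    (fun x y => match split x, split y with
                | inl a, inl b => pord U a b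
                | inr a, inr b => pord V a b
                | _, _ => false end)
    (sum_lab U V).

Definition nonempty (U : pomset) : Prop := 0 < psize U.

Inductive sp : pomset -> Prop :=
| sp_one U : iso U pone -> sp U
| sp_prim U a : iso U (prim a) -> sp U
| sp_seq U V W : sp U -> sp V -> iso W (pseq U V) -> sp W
| sp_par U V W : sp U -> sp V -> iso W (ppar U V) -> sp W.

Definition pseqs (Us : seq pomset) : pomset := foldr pseq pone Us.
Definition ppars (Us : seq pomset) : pomset := foldr ppar pone Us.

Inductive depth : pomset -> nat -> Prop :=
| depth_one U : iso U pone -> depth U 0
| depth_prim U a : iso U (prim a) -> depth U 1
| depth_seq U (Us : seq pomset) (ds : seq nat) :
    1 < size Us -> size ds = size Us ->
    (forall i, i < size Us ->
       nonempty (nth pone Us i) /\ depth (nth pone Us i) (nth 0 ds i)) ->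
    iso U (pseqs Us) ->
    (forall Vs : seq pomset,
       (forall i, i < size Vs -> nonempty (nth pone Vs i)) ->
       iso U (pseqs Vs) -> size Vs <= size Us) ->
    depth U (foldr maxn 0 ds).+1
| depth_par U (Us : seq pomset) (ds : seq nat) :
    1 < size Us -> size ds = size Us ->
    (forall i, i < size Us ->
       nonempty (nth pone Us i) /\ depth (nth pone Us i) (nth 0 ds i)) ->
    iso U (ppars Us) ->
    (forall Vs : seq pomset,
       (forall i, i < size Vs -> nonempty (nth pone Vs i)) ->
       iso U (ppars Vs) -> size Vs <= size Us) ->
    depth U (foldr maxn 0 ds).+1.

End Pomsets.

Record PA (Sigma : finType) (Q : Type) := MkPA {
  delta : Q -> Sigma -> Q;
  gamma : Q -> Q -> Q -> Q;
  F : Q -> Prop;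
  bot : Q;
  top : Q;
  bot_notF : ~ F bot;
  top_F : F top;
  delta_bot : forall a, delta bot a = bot;
  delta_top : forall a, delta top a = bot;
  gamma_bot : forall r s, gamma bot r s = bot;
  gamma_top : forall r s, gamma top r s = bot }.

Section Traces.
Variables (Sigma : finType) (Q : Type) (A : PA Sigma Q).

Inductive trace : Q -> pomset Sigma -> Q -> Prop :=
| tr_one q U : iso U (pone Sigma) -> trace q U q
| tr_prim q a U : iso U (prim a) -> trace q U (delta A q a)
| tr_seq q q'' q' U V W :
    trace q U q'' -> trace q'' V q' -> iso W (pseq U V) -> trace q W q'
| tr_par q r r' s s' U V W :
    trace r U r' -> F A r' -> trace s V s' -> F A s' ->
    iso W (ppar U V) -> trace q W (gamma A q r s).

Definition L (q : Q) (U : pomset Sigma) : Prop :=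
  exists q', F A q' /\ trace q U q'.

(* generating relation of the support preorder: step p q means p is
   directly below q *)
Definition support_step (p q : Q) : Prop :=
  (exists r s, gamma A q r s <> bot A /\ (p = r \/ p = s))
  \/ (exists a, p = delta A q a)
  \/ (exists r s, p = gamma A q r s).

Definition support_le : relation Q := clos_refl_trans Q support_step.

Definition support (q : Q) : Q -> Prop := fun p => support_le p q.

Definition fin_supported : Prop :=
  forall q, exists l : list Q, forall p, support q p -> In p l.

End Traces.

(* Let Z_0 = U and Z_(k+1) = V . ((X || Z_k) . W).  Every Z_k is accepted from
   q0: V loops on q0, the fork gamma(q0, q2, q0) = q4 runs X from q2 and, by
   induction, Z_k from q0, and W leads from q4 to an accepting state.  As X and
   one of V, W are non-empty, Z_(k+1) is a parallel-indecomposable factor of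
   X || Z_(k+1), which is a sequentially indecomposable factor of Z_(k+2), so
   the depth grows with k.  Since depth is defined through maximal
   decompositions, this rests on two facts: every sp-pomset factors into
   indecomposable sp-pomsets (hence has a depth), and no decomposition into
   non-empty parts is longer than such a factorization. *)

From mathcomp Require Import all_boot zify.
Set Implicit Arguments. Unset Strict Implicit. Unset Printing Implicit Defensive.

Section SeriesParallel.
Variable Sigma : finType.
Notation pom := (pomset Sigma).
Notation po P := (@pord _ P).
Notation pl P := (@plab _ P).
Notation one := (pone Sigma).
Implicit Types (c : bool) (P Q U V W X Y : pom) (Us Vs : seq pom).

(* [pbin true] is [pseq] and [pbin false] is [ppar], both by conversion. *)
Definition pbin c U V : pom :=
  @Pomset Sigma (psize U + psize V)
    (fun x y => match split x, split y with
                | inl a, inl b => po U a b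
                | inr a, inr b => po V a b
                | inl _, inr _ => c
                | inr _, inl _ => false end)
    (@sum_lab _ U V).

Definition pbins c Us : pom := foldr (pbin c) one Us.

Lemma pseqsE Us : pseqs Us = pbins true Us.
Proof. by elim: Us => //= U Us ->. Qed.

Lemma pparsE Us : ppars Us = pbins false Us.
Proof. by elim: Us => //= U Us ->. Qed.

Lemma split_lshift m n (a : 'I_m) : split (lshift n a) = inl a.
Proof. exact: (unsplitK (inl a)). Qed.

Lemma split_rshift m n (b : 'I_n) : split (rshift m b) = inr b.
Proof. exact: (unsplitK (inr b)). Qed.

Lemma iso_of P Q (f : 'I_(psize P) -> 'I_(psize Q)) g :
  cancel f g -> cancel g f -> {mono f : x y / po P x y >-> po Q x y} ->
  (forall x, pl Q (f x) = pl P x) -> iso P Q.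
Proof. by move=> fK gK fpo flab; exists f; split; [exact: Bijective fK gK|]. Qed.

Lemma iso_inv P Q : iso P Q -> exists (f : 'I_(psize P) -> 'I_(psize Q)) g,
  [/\ cancel f g, cancel g f, {mono f : x y / po P x y >-> po Q x y}
    & {mono g : x y / po Q x y >-> po P x y}].
Proof. by case=> f [[g fK gK] [fpo _]]; exists f, g; split=> // x y; rewrite -fpo !gK. Qed.

Lemma iso_refl P : iso P P.
Proof. exact: (@iso_of _ _ id id). Qed.

Lemma iso_sym P Q : iso P Q -> iso Q P.
Proof.
case=> f [[g fK gK] [fpo flab]]; apply: (iso_of gK fK) => [x y|x].
- by rewrite -fpo !gK.
- by rewrite -flab gK.
Qed.

Lemma iso_trans P Q W : iso P Q -> iso Q W -> iso P W.
Proof.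
case=> f [[g fK gK] [fpo flab]]; case=> f' [[g' fK' gK'] [fpo' flab']].
apply: (@iso_of _ _ (f' \o f) (g \o g')) => [x|x|x y|x] /=.
- by rewrite fK' fK.
- by rewrite gK gK'.
- by rewrite fpo' fpo.
- by rewrite flab' flab.
Qed.

Lemma iso_size P Q : iso P Q -> psize P = psize Q.
Proof. by case=> f [/bij_eq_card]; rewrite !card_ord. Qed.

Lemma iso_oneP P : iso P one <-> psize P = 0.
Proof.
split=> [/iso_size //|P0].
have absurd (x : 'I_(psize P)) : False by case: x; rewrite P0.
apply: (@iso_of P one (cast_ord P0) (cast_ord (esym P0))) => [x|x|x|x];
  by [apply: val_inj | case: (absurd x)].
Qed.

Lemma nontrivial_psize P : ~ iso P one -> 0 < psize P.
Proof. by move=> P_nontriv; rewrite lt0n; apply/eqP => /iso_oneP. Qed.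

Lemma pbin_cong c U U' V V' : iso U U' -> iso V V' -> iso (pbin c U V) (pbin c U' V').
Proof.
case=> f1 [[g1 fK1 gK1] [po1 l1]]; case=> f2 [[g2 fK2 gK2] [po2 l2]].
pose sum_map m n m' n' (h1 : 'I_m -> 'I_m') (h2 : 'I_n -> 'I_n') (x : 'I_(m + n)) :=
  match split x with inl a => lshift n' (h1 a) | inr b => rshift m' (h2 b) end.
apply: (@iso_of (pbin c U V) (pbin c U' V') (sum_map _ _ _ _ f1 f2) (sum_map _ _ _ _ g1 g2))
  => [x|x|x y|x]; rewrite /sum_map /= /sum_lab.
- by case: (split_ordP x) => a ->; rewrite ?split_lshift ?split_rshift ?fK1 ?fK2.
- by case: (split_ordP x) => a ->; rewrite ?split_lshift ?split_rshift ?gK1 ?gK2.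
- by case: (split_ordP x) => a _; case: (split_ordP y) => b _;
    rewrite ?split_lshift ?split_rshift.
- by case: (split_ordP x) => a _; rewrite ?split_lshift ?split_rshift.
Qed.

Ltac by_split_cases :=
  repeat (try rewrite /sum_lab; simpl;
          match goal with |- context [split ?z] => case: (splitP z) => ? ? end);
  repeat match goal with j : 'I_?n |- _ =>
    lazymatch goal with
    | _ : is_true (nat_of_ord j < n) |- _ => fail
    | _ => have := ltn_ord j; move=> ?
    end end;
  first [ by [] | exfalso; simpl in *; lia | f_equal; apply: val_inj; simpl in *; lia ].

Lemma iso_cast P Q (E : psize P = psize Q) :
  (forall x y, po Q (cast_ord E x) (cast_ord E y) = po P x y) ->
  (forall x, pl Q (cast_ord E x) = pl P x) -> iso P Q.
Proof. by apply: iso_of (cast_ordK E) (cast_ordKV E). Qed.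

Lemma pbin_assoc c U V W : iso (pbin c (pbin c U V) W) (pbin c U (pbin c V W)).
Proof.
have E : psize (pbin c (pbin c U V) W) = psize (pbin c U (pbin c V W)).
  exact/esym/addnA.
by apply: (@iso_cast _ _ E) => [x y|x] /=; by_split_cases.
Qed.

Lemma pbin1 c V : iso (pbin c one V) V.
Proof.
have E : psize (pbin c one V) = psize V by exact: add0n.
by apply: (@iso_cast _ _ E) => [x y|x] /=; by_split_cases.
Qed.

Lemma pbinr1 c U : iso (pbin c U one) U.
Proof.
have E : psize (pbin c U one) = psize U by exact: addn0.
by apply: (@iso_cast _ _ E) => [x y|x] /=; by_split_cases.
Qed.

Lemma pbin_size0l c U V : psize U = 0 -> iso (pbin c U V) V.
Proof. by move/iso_oneP=> U1; apply: iso_trans (pbin_cong c U1 (iso_refl V)) (pbin1 c V). Qed.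

Lemma pbin_size0r c U V : psize V = 0 -> iso (pbin c U V) U.
Proof. by move/iso_oneP=> V1; apply: iso_trans (pbin_cong c (iso_refl U) V1) (pbinr1 c U). Qed.

Lemma pbins_cat c Us Vs : iso (pbins c (Us ++ Vs)) (pbin c (pbins c Us) (pbins c Vs)).
Proof.
elim: Us => [|U Us IH] /=; first exact/iso_sym/pbin1.
exact: iso_trans (pbin_cong c (iso_refl U) IH) (iso_sym (pbin_assoc c _ _ _)).
Qed.

Lemma psize_pbins c Us : psize (pbins c Us) = \sum_(U <- Us) psize U.
Proof. by elim: Us => [|U Us IH]; rewrite ?big_nil ?big_cons //= IH. Qed.

Lemma psize_nth_lt c Us i : 1 < size Us ->
  (forall j, j < size Us -> 0 < psize (nth one Us j)) ->
  i < size Us -> psize (nth one Us i) < psize (pbins c Us).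
Proof.
move=> Us_gt1 Us_ne lt_i.
have lt_j : (i == 0) < size Us by case: (i == 0); last apply: ltnW.
have neq_ij : Ordinal lt_j != Ordinal lt_i by rewrite -val_eqE /=; case: (i) (lt_i).
rewrite psize_pbins (big_nth one) big_mkord (bigD1 (Ordinal lt_i)) //=.
rewrite (bigD1 (Ordinal lt_j)) //= -addn1 leq_add2l.
by rewrite addn_gt0 Us_ne.
Qed.

Fixpoint block c Us : 'I_(psize (pbins c Us)) -> nat :=
  match Us return 'I_(psize (pbins c Us)) -> nat with
  | [::] => fun _ => 0
  | U :: Us' => fun x : 'I_(psize U + psize (pbins c Us')) =>
      if split x is inr y then (block y).+1 else 0
  end.

Lemma block_lt c Us (x : 'I_(psize (pbins c Us))) : block x < size Us.
Proof.
elim: Us x => [[]//|U Us IH] x /=.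
by case: (split x) => //= y; rewrite ltnS.
Qed.

Lemma pbins_po c Us (x y : 'I_(psize (pbins c Us))) : block x != block y ->
  po (pbins c Us) x y = c && (block x < block y).
Proof.
elim: Us x y => [[]//|U Us IH] x y /=.
case: (split x) => a; case: (split y) => b //=; rewrite ?andbT ?andbF //.
by rewrite eqSS ltnS; apply: IH.
Qed.

Lemma block_embedding c Us i : i < size Us ->
  exists e : 'I_(psize (nth one Us i)) -> 'I_(psize (pbins c Us)),
    [/\ {mono e : u v / po _ u v >-> po _ u v}, forall u, block (e u) = i
      & forall x, block x = i -> exists u, e u = x].
Proof.
elim: Us i => [|U Us IH] [|i] //= lt_i.
  exists (lshift _); split=> [u v|u|x] /=; rewrite ?split_lshift //.
  by case: split_ordP => // a ->; exists a.
have [e [e_mono e_block e_onto]] := IH i lt_i.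
exists (fun u => rshift _ (e u)); split=> [u v|u|x] /=;
  rewrite ?split_rshift ?e_mono ?e_block //.
by case: split_ordP => // b -> [/e_onto [u <-]]; exists u.
Qed.

(* [crossing c P x y] holds when [x] and [y] may lie in the left and the right
   operand of a decomposition of [P] as [pbin c]: [x] below [y] for [c = true],
   [x] and [y] incomparable for [c = false]. *)
Definition crossing c P (x y : 'I_(psize P)) : bool :=
  if c then po P x y else ~~ po P x y && ~~ po P y x.

Definition indecomposable c P : Prop :=
  forall T : pred 'I_(psize P),
    (forall x y, T x -> ~~ T y -> crossing c x y) -> forall x y, T x -> T y.

Lemma crossing_mono c P Q (f : 'I_(psize P) -> 'I_(psize Q)) x y :
  {mono f : u v / po P u v >-> po Q u v} -> crossing c (f x) (f y) = crossing c x y.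
Proof. by move=> f_mono; rewrite /crossing !f_mono. Qed.

Lemma crossing_block c Us (x y : 'I_(psize (pbins c Us))) :
  block x < block y -> crossing c x y.
Proof.
move=> lt_xy; rewrite /crossing pbins_po ?pbins_po ?lt_xy ?(ltn_eqF lt_xy) //.
  by rewrite ltnNge ltnW // andbF andbT; case: (c).
by rewrite eq_sym (ltn_eqF lt_xy).
Qed.

Lemma indecomposable_size_max c P Us Vs :
  iso P (pbins c Us) -> (forall i, i < size Us -> indecomposable c (nth one Us i)) ->
  iso P (pbins c Vs) -> (forall j, j < size Vs -> 0 < psize (nth one Vs j)) ->
  size Vs <= size Us.
Proof.
move=> /iso_inv [f [f' [fK f'K _ f'_mono]]] Us_indec.
move=> /iso_inv [g [g' [_ g'K g_mono _]]] Vs_ne.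
pose bU x := block (f x); pose bV x := block (g x).
(* An indecomposable block of [Us] cannot be cut by a block boundary of [Vs]. *)
have bV_mono x y : bU x = bU y -> bV x <= bV y.
  move=> eq_xy; rewrite leqNgt; apply/negP => lt_yx.
  have [e [e_mono e_block e_onto]] := block_embedding c (block_lt (f x)).
  pose h u := f' (e u).
  have h_mono : {mono h : u v / po _ u v >-> po _ u v}.
    by move=> u v; rewrite /h f'_mono e_mono.
  have [ux hx] := e_onto (f x) erefl.
  have [uy hy] := e_onto (f y) (esym eq_xy).
  suff: bV (h ux) <= bV y by rewrite /h hx fK leqNgt lt_yx.
  have le_uy_y : bV (h uy) <= bV y by rewrite /h hy fK.
  apply: (Us_indec _ (block_lt (f x)) (fun u => bV (h u) <= bV y) _ uy ux le_uy_y).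
  move=> u v /= le_uy; rewrite -ltnNge => lt_yv.
  rewrite -(crossing_mono _ _ _ h_mono) -(crossing_mono _ _ _ g_mono).
  by apply: crossing_block; apply: leq_ltn_trans le_uy lt_yv.
have bV_onto (j : 'I_(size Vs)) : exists x, bV x = j.
  have [e [_ e_block _]] := block_embedding c (ltn_ord j).
  by exists (g' (e (Ordinal (Vs_ne _ (ltn_ord j))))); rewrite /bV g'K e_block.
have [x_of x_ofP] := fin_all_exists bV_onto.
pose phi (j : 'I_(size Vs)) : 'I_(size Us) := Ordinal (block_lt (f (x_of j))).
have phi_inj : injective phi.
  move=> j k /(congr1 val) /= eq_jk; apply: val_inj.
  by rewrite /= -x_ofP -(x_ofP k); apply/eqP; rewrite eqn_leq !bV_mono.
by rewrite -(card_ord (size Vs)) -(card_ord (size Us)); apply: leq_card phi_inj.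
Qed.

Lemma indecomposable_iso c P Q : iso P Q -> indecomposable c Q -> indecomposable c P.
Proof.
move=> /iso_inv [f [g [fK gK f_mono _]]] Q_indec T T_cut x y Tx.
have := Q_indec (fun z => T (g z)) _ (f x) (f y); rewrite !fK; apply=> // u v Tu Tv.
by rewrite -(gK u) -(gK v) (crossing_mono _ _ _ f_mono) T_cut.
Qed.

Lemma indecomposable_prim c P a : iso P (prim a) -> indecomposable c P.
Proof.
move=> /iso_size /= P1 T _ x y; suff -> : x = y by [].
have x0 : val x < 1 := leq_trans (ltn_ord x) (eq_leq P1).
have y0 : val y < 1 := leq_trans (ltn_ord y) (eq_leq P1).
by apply: val_inj; case: (val x) x0; case: (val y) y0.
Qed.

Lemma indecomposable_pbin c c' U V : c != c' ->
  0 < psize U -> 0 < psize V -> indecomposable c (pbin c' U V).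
Proof.
move=> neq_c U_ne V_ne T T_cut.
pose in_left (x : 'I_(psize U + psize V)) := if split x is inl _ then true else false.
have T_across x y : T x -> in_left x != in_left y -> T y.
  move=> Tx; apply: contraR => /(T_cut _ _ Tx); rewrite /crossing /in_left /=.
  by case: (split x) => ?; case: (split y) => ? //=; move: neq_c; case: (c); case: (c').
move=> x y Tx; have [eq_xy|] := eqVneq (in_left x) (in_left y); last exact: T_across.
pose z := if in_left x then rshift _ (Ordinal V_ne) else lshift _ (Ordinal U_ne).
have z_across : in_left z = ~~ in_left x.
  by rewrite /z /in_left; case: (split x); rewrite /= ?split_lshift ?split_rshift.
apply: (T_across z); first by apply: T_across Tx _; rewrite z_across; case: (in_left x).
by rewrite z_across -eq_xy; case: (in_left x).
Qed.

Definition sp_factor c U : Prop := [/\ 0 < psize U, sp U & indecomposable c U].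

Definition factorization c P Us : Prop :=
  (forall i, i < size Us -> sp_factor c (nth one Us i)) /\ iso P (pbins c Us).

Lemma factorization_iso c P Q Us : iso P Q -> factorization c Q Us -> factorization c P Us.
Proof. by move=> PQ [Us_factor QUs]; split=> //; apply: iso_trans PQ QUs. Qed.

Lemma factorization_cat c U V Us Vs : factorization c U Us -> factorization c V Vs ->
  factorization c (pbin c U V) (Us ++ Vs).
Proof.
move=> [Us_factor UUs] [Vs_factor VVs]; split=> [i|].
  rewrite size_cat nth_cat; case: (ltnP i (size Us)) => [/Us_factor //|le_Us_i lt_i].
  by apply: Vs_factor; rewrite -(ltn_add2l (size Us)) subnKC.
exact: iso_trans (pbin_cong c UUs VVs) (iso_sym (pbins_cat c Us Vs)).
Qed.

Lemma factorization1 c U : sp_factor c U -> factorization c U [:: U].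
Proof. by move=> U_factor; split=> [[]|] //; apply/iso_sym/pbinr1. Qed.

Lemma factorization_size_gt0 c P Us :
  factorization c P Us -> 0 < psize P -> 0 < size Us.
Proof. by case: Us => // -[_ /iso_size ->]. Qed.

Lemma factorization_pbin c c' A B P : iso P (pbin c' A B) -> sp P ->
  (exists As, factorization c A As) -> (exists Bs, factorization c B Bs) ->
  exists Us, factorization c P Us.
Proof.
move=> PAB spP [As fAs] [Bs fBs].
have [A0|A_ne] := posnP (psize A).
  by exists Bs; apply: factorization_iso (iso_trans PAB (pbin_size0l _ _ A0)) fBs.
have [B0|B_ne] := posnP (psize B).
  by exists As; apply: factorization_iso (iso_trans PAB (pbin_size0r _ _ B0)) fAs.
have [eq_c|neq_c] := eqVneq c c'.
  by subst c'; exists (As ++ Bs); apply: factorization_iso PAB (factorization_cat fAs fBs).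
exists [:: P]; apply: factorization1; split=> //.
  by rewrite (iso_size PAB) addn_gt0 A_ne.
exact: indecomposable_iso PAB (indecomposable_pbin neq_c A_ne B_ne).
Qed.

Lemma sp_factorization c P : sp P -> exists Us, factorization c P Us.
Proof.
elim=> {P} [P P1|P a Pa|A B P spA IHA spB IHB PAB|A B P spA IHA spB IHB PAB].
- by exists [::]; split.
- exists [:: P]; apply: factorization1.
  by split; [rewrite (iso_size Pa) | exact: sp_prim Pa | exact: indecomposable_prim Pa].
- exact: factorization_pbin PAB (sp_seq spA spB PAB) IHA IHB.
- exact: factorization_pbin PAB (sp_par spA spB PAB) IHA IHB.
Qed.

Lemma factorization_pbin_nontrivial c A B P : iso P (pbin c A B) -> sp A -> sp B ->
  0 < psize A -> 0 < psize B -> exists Us, 1 < size Us /\ factorization c P Us.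
Proof.
move=> PAB spA spB A_ne B_ne.
have [As fAs] := sp_factorization c spA; have [Bs fBs] := sp_factorization c spB.
exists (As ++ Bs); split; last exact: factorization_iso PAB (factorization_cat fAs fBs).
have := factorization_size_gt0 fAs A_ne; have := factorization_size_gt0 fBs B_ne.
by rewrite size_cat; lia.
Qed.

Lemma sp_classification P : sp P -> forall Q, iso Q P ->
  [\/ psize Q = 0, exists a, iso Q (prim a)
    | exists c Us, 1 < size Us /\ factorization c Q Us].
Proof.
elim=> {P} [P P1|P a Pa|A B P spA IHA spB IHB PAB|A B P spA IHA spB IHB PAB] Q QP.
- by constructor 1; rewrite (iso_size (iso_trans QP P1)).
- by constructor 2; exists a; apply: iso_trans QP Pa.
all: have {P QP PAB} QAB := iso_trans QP PAB.
all: have [A0|A_ne] := posnP (psize A);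
  first exact/IHB/(iso_trans QAB)/pbin_size0l.
all: have [B0|B_ne] := posnP (psize B);
  first exact/IHA/(iso_trans QAB)/pbin_size0r.
- by constructor 3; exists true; apply: factorization_pbin_nontrivial QAB spA spB A_ne B_ne.
- by constructor 3; exists false; apply: factorization_pbin_nontrivial QAB spA spB A_ne B_ne.
Qed.

Lemma depth_factorization c P Us ds : 1 < size Us -> factorization c P Us ->
  size ds = size Us -> (forall i, i < size Us -> depth (nth one Us i) (nth 0 ds i)) ->
  depth P (foldr maxn 0 ds).+1.
Proof.
move=> Us_gt1 [Us_factor PUs] ds_size Us_depth.
have Us_pieces i :
    i < size Us -> nonempty (nth one Us i) /\ depth (nth one Us i) (nth 0 ds i).
  by move=> lt_i; split; [case: (Us_factor i lt_i) | exact: Us_depth].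
have Us_max Vs : (forall j, j < size Vs -> nonempty (nth one Vs j)) ->
    iso P (pbins c Vs) -> size Vs <= size Us.
  by move=> Vs_ne PVs; apply: indecomposable_size_max PUs _ PVs Vs_ne => i /Us_factor [].
case: c PUs Us_max {Us_factor} => PUs Us_max.
- apply: (depth_seq Us_gt1 ds_size Us_pieces PUs) => Vs; rewrite pseqsE; exact: Us_max.
- apply: (depth_par Us_gt1 ds_size Us_pieces PUs) => Vs; rewrite pparsE; exact: Us_max.
Qed.

Lemma choose_nth_seq n (R : nat -> nat -> Prop) : (forall i, i < n -> exists d, R i d) ->
  exists2 ds : seq nat, size ds = n & forall i, i < n -> R i (nth 0 ds i).
Proof.
elim: n R => [|n IH] R R_ex; first by exists [::].
have [d0 R0] := R_ex 0 isT.
have [ds ds_size Rds] := IH (fun i => R i.+1) (fun i => R_ex i.+1).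
by exists (d0 :: ds) => [|[]]; rewrite /= ?ds_size.
Qed.

Lemma sp_depth P : sp P -> exists d, depth P d.
Proof.
have [N] := ubnP (psize P); elim: N P => // N IH P lt_P_N spP.
case: (sp_classification spP (iso_refl P)) => [P0|[a Pa]|[c [Us [Us_gt1 fUs]]]].
- by exists 0; apply/depth_one/iso_oneP.
- by exists 1; apply: depth_prim Pa.
have [Us_factor PUs] := fUs.
have Us_depth i : i < size Us -> exists d, depth (nth one Us i) d.
  move=> lt_i; have [_ spUi _] := Us_factor i lt_i; apply: IH spUi.
  rewrite -ltnS (leq_trans _ lt_P_N) // ltnS (iso_size PUs).
  by apply: psize_nth_lt lt_i => // j /Us_factor [].
have [ds ds_size ds_depth] := choose_nth_seq Us_depth.
by exists (foldr maxn 0 ds).+1; apply: depth_factorization Us_gt1 fUs ds_size ds_depth.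
Qed.

Lemma depth_gt_factor c P Us i d : 1 < size Us -> factorization c P Us ->
  i < size Us -> depth (nth one Us i) d -> exists2 d', d < d' & depth P d'.
Proof.
move=> Us_gt1 fUs lt_i Ui_depth; have [Us_factor _] := fUs.
have Us_depth j : j < size Us -> exists d', depth (nth one Us j) d' /\ (j = i -> d' = d).
  move=> lt_j; have [->|neq_ji] := eqVneq j i; first by exists d.
  have [_ spUj _] := Us_factor j lt_j; have [d' Uj_depth] := sp_depth spUj.
  by exists d'; split=> // /eqP; rewrite (negPf neq_ji).
have [ds ds_size ds_depth] := choose_nth_seq Us_depth.
exists (foldr maxn 0 ds).+1.
  have [_ /(_ erefl) <-] := ds_depth i lt_i; rewrite ltnS foldrE.
  by apply: leq_bigmax_seq => //; apply: mem_nth; rewrite ds_size.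
by apply: depth_factorization Us_gt1 fUs ds_size _ => j /ds_depth [].
Qed.

Lemma depth_gt_middle c A Y B P d : sp A -> sp B -> 0 < psize A + psize B ->
  sp_factor c Y -> depth Y d -> iso P (pbin c A (pbin c Y B)) ->
  exists2 d', d < d' & depth P d'.
Proof.
move=> spA spB AB_ne Y_factor Y_depth PAYB.
have [As fAs] := sp_factorization c spA; have [Bs fBs] := sp_factorization c spB.
have fYBs := factorization_cat (factorization1 Y_factor) fBs.
have fUs := factorization_iso PAYB (factorization_cat fAs fYBs).
apply: (depth_gt_factor _ fUs (i := size As)); rewrite ?size_cat /= ?nth_cat ?ltnn ?subnn //.
  rewrite addn_gt0 in AB_ne.
  by case/orP: AB_ne => [/(factorization_size_gt0 fAs)|/(factorization_size_gt0 fBs)]; lia.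
by rewrite -addn1 leq_add2l.
Qed.

Fixpoint nest U V X W k : pom :=
  if k is k'.+1 then pseq V (pseq (ppar X (nest U V X W k')) W) else U.

Section Nest.
Variables U V X W : pom.
Hypotheses (spU : sp U) (spV : sp V) (spX : sp X) (spW : sp W).
Hypotheses (X_ne : 0 < psize X) (VW_ne : 0 < psize V + psize W).

Lemma sp_nest k : sp (nest U V X W k).
Proof.
elim: k => //= k IH.
exact: sp_seq spV (sp_seq (sp_par spX IH (iso_refl _)) spW (iso_refl _)) (iso_refl _).
Qed.

Lemma nest_factor k : sp_factor false (nest U V X W k.+1).
Proof.
have M_ne : 0 < psize X + psize (nest U V X W k) + psize W.
  by rewrite -addnA addn_gt0 X_ne.
split; [by rewrite /= addn_gt0 M_ne orbT | exact: sp_nest |].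
have [V0|V_ne] := posnP (psize V); last exact: indecomposable_pbin.
have W_ne : 0 < psize W by move: VW_ne; rewrite V0.
apply: indecomposable_iso (pbin_size0l _ _ V0) _.
by apply: indecomposable_pbin; rewrite //= addn_gt0 X_ne.
Qed.

Lemma nest_depth k : exists2 d, k <= d & depth (nest U V X W k.+1) d.
Proof.
elim: k => [|k [d le_kd Y_depth]]; first by have [d] := sp_depth (sp_nest 1); exists d.
pose Y := nest U V X W k.+1.
have [d1 lt_d_d1 XY_depth] : exists2 d1, d < d1 & depth (ppar X Y) d1.
  apply: (depth_gt_middle spX (sp_one (iso_refl one)) _ (nest_factor k) Y_depth).
    by rewrite addn0.
  exact: pbin_cong (iso_refl X) (iso_sym (pbinr1 false Y)).
have XY_factor : sp_factor true (ppar X Y).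
  split; [by rewrite /= addn_gt0 X_ne | exact: sp_par spX (sp_nest _) (iso_refl _) |].
  by apply: indecomposable_pbin => //; case: (nest_factor k).
have [d2 lt_d1_d2 Z_depth] := depth_gt_middle spV spW VW_ne XY_factor XY_depth (iso_refl _).
by exists d2 => //; lia.
Qed.

End Nest.

End SeriesParallel.

Lemma L_nest (Sigma : finType) (Q : Type) (A : PA Sigma Q) (q0 q1 q2 q3 q4 q5 : Q)
    (U V W X : pomset Sigma) :
  F A q1 -> F A q3 -> F A q5 ->
  trace A q0 U q1 -> trace A q0 V q0 -> trace A q2 X q3 -> trace A q4 W q5 ->
  gamma A q0 q2 q0 = q4 -> forall k, L A q0 (nest U V X W k).
Proof.
move=> F1 F3 F5 tU tV tX tW q4E; elim=> [|k [q [Fq tZ]]]; first by exists q1.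
exists q5; split=> //; rewrite -q4E in tW.
apply: tr_seq tV (tr_seq (tr_par _ tX F3 tZ Fq (iso_refl _)) tW (iso_refl _)) (iso_refl _).
Qed.

Theorem mainTheorem9 (Sigma : finType) (Q : Type) (A : PA Sigma Q)
  (Hfs : fin_supported A)
  (q0 q1 q2 q3 q4 q5 : Q) (U V W X : pomset Sigma) :
  F A q1 -> F A q3 -> F A q5 ->
  sp U -> sp V -> sp W -> sp X ->
  trace A q0 U q1 -> trace A q0 V q0 -> trace A q2 X q3 -> trace A q4 W q5 ->
  gamma A q0 q2 q0 = q4 ->
  ~ iso X (pone Sigma) ->
  (~ iso W (pone Sigma) \/ ~ iso V (pone Sigma)) ->
  forall n : nat, exists (Y : pomset Sigma) (d : nat),
    L A q0 Y /\ depth Y d /\ n < d.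
Proof.
move=> F1 F3 F5 spU spV spW spX tU tV tX tW q4E /nontrivial_psize X_ne WV_nontriv n.
have VW_ne : 0 < psize V + psize W.
  by rewrite addn_gt0; case: WV_nontriv => /nontrivial_psize ->; rewrite ?orbT.
have [d lt_nd Y_depth] := nest_depth spU spV spX spW X_ne VW_ne n.+1.
exists (nest U V X W n.+2), d; split=> //.
exact: L_nest F1 F3 F5 tU tV tX tW q4E _.
Qed.
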